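(* Let $p\ge1$, $\phi_1,\dots,\phi_p:\mathbb Z\to\mathbb C$, integers $t>s$, $1\le m\le p$, and $n=t-s$. (i) For $1\le i\le n$, the cofactor of the $(i,1)$ entry (which is $\phi_{m+i-1}(s+i)$) of $\Phi^{(m)}_{t,s}$ equals $\xi_{t,s+i}$. (ii) For each entry in the last row of $\Phi^{(m)}_{t,s}$, written as $\phi_l(t)$ (so $l=n-j+1$ for the $(n,j)$ entry with $j\ge2$, and $l=m+n-1$ for the $(n,1)$ entry), its cofactor equals $\xi^{(m)}_{t-l,s}$.
   Context: Convention: $\phi_l(t)=0$ for $l>p$. For integers $t>s$ and $1\le m\le p$, $\Phi^{(m)}_{t,s}$ is the $(t-s)\times(t-s)$ lower Hessenberg matrix whose $(i,j)$ entry is: $\phi_{m+i-1}(s+i)$ if $j=1$; $-1$ if $j=i+1$; $\phi_{i-j+1}(s+i)$ if $2\le j\le i$; $0$ if $j>i+1$. For $t\ge s-p+1$: $\xi^{(m)}_{t,s}=\det\Phi^{(m)}_{t,s}$ if $t>s$; $\xi^{(m)}_{t,s}=1$ if $t=s-m+1$; $\xi^{(m)}_{t,s}=0$ if $s-p+1\le t\le s$, $t\ne s-m+1$. The principal determinant is $\xi_{t,s}=\xi^{(1)}_{t,s}$ (so $\xi_{t,t}=1$). The cofactor of the $(i,j)$ entry of a square matrix is $(-1)^{i+j}$ times the determinant of the matrix with row $i$ and column $j$ deleted. *)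

From mathcomp Require Import all_boot all_order all_algebra.
From mathcomp Require Import complex Rstruct.
Set Implicit Arguments. Unset Strict Implicit. Unset Printing Implicit Defensive.
Import Order.TTheory GRing.Theory Num.Theory.
Local Open Scope ring_scope.

Definition C : comNzRingType := (Rdefinitions.R)[i].

Section Defs.
Variable (F : comPzRingType).

Definition phiz (p : nat) (phi : nat -> int -> F) (l : nat) (t : int) : F :=
  if (l <= p)%N then phi l t else 0.

(* Phi^{(m)}_{t,s} with n = t - s, indices 0-based: row i' = i-1, column j' = j-1. *)
Definition PhiMx (p : nat) (phi : nat -> int -> F) (m : nat) (s : int) (n : nat)
  : 'M[F]_n :=
  \matrix_(i < n, j < n)
    if (j == 0 :> nat) then phiz p phi (m + i) (s + (i.+1)%:Z)
    else if (j == i.+1 :> nat) then -1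
    else if (j <= i)%N then phiz p phi (i - j).+1 (s + (i.+1)%:Z)
    else 0.

(* xi^{(m)}_{t,s}; for t < s - p + 1 (where the paper leaves it undefined) we put 0. *)
Definition xi (p : nat) (phi : nat -> int -> F) (m : nat) (t s : int) : F :=
  if s < t then \det (PhiMx p phi m s `|t - s|%N)
  else if t == s - m%:Z + 1 then 1 else 0.

End Defs.

From mathcomp Require Import all_boot all_order all_algebra.
From mathcomp Require Import complex Rstruct.
From mathcomp Require Import zify.
Import Order.TTheory GRing.Theory Num.Theory.
Local Open Scope ring_scope.

(* Deleting row i and column 1 of the lower Hessenberg matrix Phi^(m)_{t,s},
   or its last row and column j, leaves a block lower triangular matrix.  One
   diagonal block is triangular with -1 on its diagonal; the other is again a
   Phi-matrix, namely Phi^(1)_{t,s+i} in the first case and Phi^(m)_{s+j-1,s}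
   in the second (empty when j = 1, matching xi^(m)_{s-m+1,s} = 1).  The power
   of -1 contributed by the triangular block cancels the cofactor sign. *)

Lemma det_castmx_lblock {R : comPzRingType} {n k l : nat} (e : n = (k + l)%N)
    (A : 'M[R]_n) :
  ursubmx (castmx (e, e) A) = 0 ->
  \det A = \det (ulsubmx (castmx (e, e) A)) * \det (drsubmx (castmx (e, e) A)).
Proof.
subst n; rewrite castmx_id => A_ur0.
by rewrite -(det_lblock _ (dlsubmx A)) -A_ur0 submxK.
Qed.

Lemma det_trig_signr {R : comPzRingType} {n : nat} (A : 'M[R]_n) :
  is_trig_mx A -> (forall i, A i i = -1) -> \det A = (-1) ^+ n.
Proof.
move=> /det_trig-> A_diag.
by rewrite (eq_bigr _ (fun i _ => A_diag i)) prodr_const card_ord.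
Qed.

Ltac ord_arith :=
  intros; repeat match goal with x : 'I_?k |- _ =>
    lazymatch goal with _ : is_true (nat_of_ord x < k)%N |- _ => fail
    | _ => have ? := ltn_ord x end end;
  rewrite ?(mxE, castmxE) /= /bump;
  repeat match goal with |- context [if ?b then _ else _] =>
    lazymatch b with context [if _ then _ else _] => fail | _ =>
    let H := fresh in case H : b end end;
  try reflexivity; try (exfalso; lia); try (congr (phiz _ _ _ _); lia).

Section Cofactors.
Variables (F : comPzRingType) (p : nat) (phi : nat -> int -> F).

Lemma cofactor_PhiMx_col0 m s n (i j : 'I_n) : nat_of_ord j = 0%N ->
  cofactor (PhiMx p phi m s n) i j =
  \det (PhiMx p phi 1 (s + i.+1%:Z) (n - i.+1)).
Proof.
move=> j0; have e : n.-1 = (i + (n - i.+1))%N by have := ltn_ord i; lia.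
rewrite /cofactor j0 addn0 (det_castmx_lblock e); last first.
  by apply/matrixP => x y; ord_arith.
rewrite [\det (ulsubmx _)]det_trig_signr; last first.
- by move=> x; ord_arith.
- by apply/is_trig_mxP => x y; ord_arith.
rewrite signrMK; congr (\det _); apply/matrixP => x y; ord_arith.
Qed.

Lemma cofactor_PhiMx_last_row m s n (i j : 'I_n) : nat_of_ord i = n.-1 ->
  cofactor (PhiMx p phi m s n) i j = \det (PhiMx p phi m s j).
Proof.
move=> i_last; have e : n.-1 = (j + (n.-1 - j))%N by have := ltn_ord j; lia.
rewrite /cofactor (det_castmx_lblock e); last first.
  by apply/matrixP => x y; ord_arith.
rewrite [\det (drsubmx _)]det_trig_signr; last first.
- by move=> x; ord_arith.
- by apply/is_trig_mxP => x y; ord_arith.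
have -> : (i + j = (n.-1 - j) + j.*2)%N by have := ltn_ord j; lia.
rewrite exprD -muln2 exprM sqrr_sign mulr1 [_ * (-1) ^+ _]mulrC signrMK.
by congr (\det _); apply/matrixP => x y; ord_arith.
Qed.

Lemma xi_detE m s k : (0 < k)%N ->
  xi p phi m (s + k%:Z) s = \det (PhiMx p phi m s k).
Proof. by move=> k_gt0; rewrite /xi ltrDl ltz_nat k_gt0 (addrC s) addrK. Qed.

Lemma xi_init m s : (0 < m)%N -> xi p phi m (s - m%:Z + 1) s = 1.
Proof. by move=> m_gt0; rewrite /xi ifF ?eqxx //; apply/negbTE; lia. Qed.

Lemma xi1_detE s k : xi p phi 1 (s + k%:Z) s = \det (PhiMx p phi 1 s k).
Proof.
case: k => [|k]; last exact: xi_detE.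
by rewrite det_mx00 -(xi_init 1 s (ltn0Sn 0)) subrK addr0.
Qed.

End Cofactors.

Theorem lemma1 (p : nat) (phi : nat -> int -> C) (t s : int) (m : nat) :
  (1 <= p)%N -> s < t -> (1 <= m)%N -> (m <= p)%N ->
  (* (i) cofactor of the (i,1) entry equals xi_{t, s+i} *)
  (forall i j : 'I_`|t - s|%N, nat_of_ord j = 0%N ->
     cofactor (PhiMx p phi m s `|t - s|%N) i j = xi p phi 1 t (s + (i.+1)%:Z)) /\
  (* (ii) cofactor of each last-row entry phi_l(t) equals xi^{(m)}_{t-l, s} *)
  (forall i j : 'I_`|t - s|%N, nat_of_ord i = (`|t - s|%N).-1 ->
     let l := if nat_of_ord j == 0%N then (m + `|t - s|%N - 1)%N
              else (`|t - s|%N - j)%N in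
     cofactor (PhiMx p phi m s `|t - s|%N) i j = xi p phi m (t - l%:Z) s).
Proof.
move=> _ lt_st m_gt0 _.
have [n ->] : exists n : nat, t = s + n%:Z.
  by exists `|t - s|%N; rewrite gez0_abs ?subr_ge0 ?ltW //; lia.
rewrite (addrC s) addrK absz_nat; split.
- move=> i j j0; rewrite cofactor_PhiMx_col0 // -xi1_detE.
  by congr xi; have := ltn_ord i; lia.
- move=> i j i_last l; rewrite cofactor_PhiMx_last_row // /l.
  case: eqP => [j0 | j_neq0].
  + rewrite j0 det_mx00 -(xi_init _ p phi m s m_gt0); congr xi; lia.
  + rewrite -xi_detE; last lia.
    by congr xi; have := ltn_ord j; lia.
Qed.
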